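(* Let $T,S\in \mathcal{B}_A(\mathcal{H})$. Then \[ \omega_A(T\pm iS)\leq 2\,\omega_{\mathbb{A}}\left[\begin{pmatrix} O&T\\ iS &O \end{pmatrix}\right]. \]
   Context: $\mathcal{H}$ is a complex Hilbert space and $A\in\mathcal{B}(\mathcal{H})$ is a nonzero positive (semidefinite) operator, inducing the semi-inner product $\langle x,y\rangle_A=\langle Ax,y\rangle$ and seminorm $\|x\|_A=\|A^{1/2}x\|$. $\mathcal{B}_A(\mathcal{H})=\{T\in\mathcal{B}(\mathcal{H}):\mathcal{R}(T^*A)\subseteq\mathcal{R}(A)\}$ is the set of operators admitting an $A$-adjoint (an operator $X$ with $\langle Tx,y\rangle_A=\langle x,Xy\rangle_A$ for all $x,y$). The $A$-numerical radius is $\omega_A(T)=\sup\{|\langle Tx,x\rangle_A| : x\in\mathcal{H},\ \|x\|_A=1\}$. $\mathbb{A}=\begin{pmatrix}A&O\\O&A\end{pmatrix}$ is the positive diagonal operator on $\mathcal{H}\oplus\mathcal{H}$, and $\omega_{\mathbb{A}}$ is the corresponding $\mathbb{A}$-numerical radius on $\mathcal{H}\oplus\mathcal{H}$ (with $\langle x,y\rangle_{\mathbb{A}}=\langle x_1,y_1\rangle_A+\langle x_2,y_2\rangle_A$). Here $iS$ denotes the operator $S$ multiplied by the imaginary unit $i$, and $O$ is the zero operator. *)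

From HB Require Import structures.
From mathcomp Require Import all_boot all_order all_algebra.
From mathcomp Require Import complex.
From mathcomp Require Import classical_sets boolp reals constructive_ereal ereal.
Set Implicit Arguments. Unset Strict Implicit. Unset Printing Implicit Defensive.
Import Order.TTheory GRing.Theory Num.Theory.
Local Open Scope ring_scope.
Local Open Scope classical_set_scope.

Section HilbertDefs.
Variable R : realType.
Local Notation C := R[i].

Definition cabs (z : C) : R := Num.sqrt (complex.Re z ^+ 2 + complex.Im z ^+ 2).

Variable H : lmodType C.

Definition is_inner_product (ip : H -> H -> C) : Prop :=
  [/\ (forall (a : C) (x y z : H), ip (a *: x + y) z = a * ip x z + ip y z),
      (forall x y : H, ip y x = (ip x y)^*),
      (forall x : H, 0 <= ip x x) &
      (forall x : H, ip x x = 0 -> x = 0)].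

Definition ipnorm (V : Type) (sip : V -> V -> C) (x : V) : R :=
  Num.sqrt (complex.Re (sip x x)).

Definition ip_complete (ip : H -> H -> C) : Prop :=
  forall u : nat -> H,
    (forall e : R, 0 < e -> exists N, forall m n, (N <= m)%N -> (N <= n)%N ->
        ipnorm ip (u m - u n) < e) ->
    exists l : H, forall e : R, 0 < e -> exists N, forall n, (N <= n)%N ->
        ipnorm ip (u n - l) < e.

Definition is_hilbert (ip : H -> H -> C) : Prop :=
  is_inner_product ip /\ ip_complete ip.

Definition bounded_op (ip : H -> H -> C) (T : H -> H) : Prop :=
  exists M : R, forall x, ipnorm ip (T x) <= M * ipnorm ip x.

Definition positive_op (ip : H -> H -> C) (A : H -> H) : Prop :=
  forall x, 0 <= ip (A x) x.

Definition is_adjoint (ip : H -> H -> C) (T Ts : H -> H) : Prop :=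
  forall x y, ip (T x) y = ip x (Ts y).

(* T in B_A(H):  R(T^* A) is contained in R(A) *)
Definition in_BA (ip : H -> H -> C) (A T : H -> H) : Prop :=
  exists Ts : H -> H, is_adjoint ip T Ts /\
    forall y, exists z, Ts (A y) = A z.

Definition ipA (ip : H -> H -> C) (A : H -> H) (x y : H) : C := ip (A x) y.

(* semi-inner product on H (+) H induced by the diagonal operator AA = diag(A,A) *)
Definition ipAA (ip : H -> H -> C) (A : H -> H) (x y : H * H) : C :=
  ipA ip A x.1 y.1 + ipA ip A x.2 y.2.

(* the operator matrix [[O, T], [iS, O]] acting on H (+) H *)
Definition opmx (T S : H -> H) (x : H * H) : H * H :=
  (T x.2, 'i%C *: S x.1).

End HilbertDefs.

Definition numrad (R : realType) (V : Type) (sip : V -> V -> R[i]) (T : V -> V)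
  : \bar R :=
  ereal_sup [set (cabs (sip (T x) x))%:E | x in [set x | ipnorm sip x = 1]].

(* Embedding x into H (+) H as u = (a x, b x) with |a|^2 + |b|^2 = 1 preserves the
   A-seminorm, and <[[O, T], [iS, O]] u, u>_AA = b a^* <Tx, x>_A + i a b^* <Sx, x>_A.
   For a = b = 1/sqrt 2 this is <(T + iS) x, x>_A / 2, and for a = 1/sqrt 2,
   b = i/sqrt 2 it is i <(T - iS) x, x>_A / 2. *)
From HB Require Import structures.
From mathcomp Require Import all_boot all_order all_algebra.
From mathcomp Require Import complex.
From mathcomp Require Import classical_sets boolp reals constructive_ereal ereal.
From mathcomp Require Import ring.
Set Implicit Arguments. Unset Strict Implicit. Unset Printing Implicit Defensive.
Import Order.TTheory GRing.Theory Num.Theory.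
Local Open Scope ring_scope.

Section ComplexModulus.
Variable R : realType.
Local Notation C := R[i].

Lemma cabsE (z : C) : (cabs z)%:C%C = `|z|.
Proof. by rewrite normc_def. Qed.

Lemma cabsM (y z : C) : cabs (y * z) = cabs y * cabs z.
Proof. by apply: complexI; rewrite rmorphM /= !cabsE normrM. Qed.

Lemma cabs_natr n : cabs (n%:R : C) = n%:R.
Proof. by apply: complexI; rewrite cabsE rmorph_nat normr_nat. Qed.

Lemma cabsNi : cabs (- 'i%C : C) = 1.
Proof. by apply: complexI; rewrite cabsE normrN normCi. Qed.

Lemma conj_i : ('i%C : C)^* = - 'i%C.
Proof. exact: conjCi. Qed.

Lemma mulii : ('i%C : C) * 'i%C = -1.
Proof. by rewrite -expr2 sqr_i. Qed.

Definition invsqrt2 : C := ((Num.sqrt (2 : R))^-1)%:C%C.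

Lemma conj_invsqrt2 : invsqrt2^* = invsqrt2.
Proof. by apply/conj_Creal/complex_realP; exists (Num.sqrt 2)^-1. Qed.

Lemma invsqrt2_sqr : invsqrt2 * invsqrt2 = 2^-1.
Proof.
rewrite /invsqrt2 -rmorphM /= -invfM -expr2 sqr_sqrtr ?ler0n //.
by rewrite rmorphV ?unitfE ?pnatr_eq0 //= rmorph_nat.
Qed.

Lemma mulr_half : (2 : C) * 2^-1 = 1.
Proof. by rewrite divff // pnatr_eq0. Qed.

Lemma normsum_invsqrt2 : invsqrt2 * invsqrt2^* + invsqrt2 * invsqrt2^* = 1.
Proof.
by rewrite conj_invsqrt2 invsqrt2_sqr -mulr2n -(mulr_natl 2^-1) mulr_half.
Qed.

Lemma normsum_invsqrt2_i :
  invsqrt2 * invsqrt2^* + 'i%C * invsqrt2 * ('i%C * invsqrt2)^* = 1.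
Proof.
rewrite rmorphM /= conj_i conj_invsqrt2.
transitivity (invsqrt2 * invsqrt2 * (1 - 'i%C * 'i%C)); first by ring.
by rewrite mulii opprK invsqrt2_sqr mulrC mulr_half.
Qed.

End ComplexModulus.

Arguments invsqrt2 {R}.

Lemma numrad_le_embed (R : realType) (V W : Type)
    (sipV : V -> V -> R[i]) (sipW : W -> W -> R[i])
    (f : V -> V) (g : W -> W) (e : V -> W) (c : R[i]) :
  (forall x, ipnorm sipW (e x) = ipnorm sipV x) ->
  (forall x, sipV (f x) x = c * sipW (g (e x)) (e x)) ->
  (numrad sipV f <= (cabs c)%:E * numrad sipW g)%E.
Proof.
move=> e_isometric f_eq; apply: ge_ereal_sup => _ [x /= x_unit <-].
rewrite f_eq cabsM EFinM lee_wpmul2l ?lee_fin ?sqrtr_ge0 //.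
by apply: ereal_sup_ubound; exists (e x); rewrite //= e_isometric.
Qed.

Section InnerProduct.
Variables (R : realType) (H : lmodType R[i]) (ip : H -> H -> R[i]).
Hypothesis ip_inner : is_inner_product ip.

Lemma ipDl x y z : ip (x + y) z = ip x z + ip y z.
Proof. by case: ip_inner => lin _ _ _; rewrite -[x]scale1r lin mul1r scale1r. Qed.

Lemma ip0l z : ip 0 z = 0.
Proof. by apply: (addrI (ip 0 z)); rewrite -ipDl !addr0. Qed.

Lemma ipZl a x z : ip (a *: x) z = a * ip x z.
Proof. by case: ip_inner => lin _ _ _; rewrite -[a *: x]addr0 lin ip0l addr0. Qed.

Lemma ipZr a x y : ip x (a *: y) = a^* * ip x y.
Proof. by case: ip_inner => _ sym _ _; rewrite sym ipZl rmorphM /= -sym. Qed.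

Variables (A T S : {linear H -> H}).

Lemma ipAA_diag a b x :
  ipAA ip A (a *: x, b *: x) (a *: x, b *: x) = (a * a^* + b * b^*) * ipA ip A x x.
Proof. by rewrite /ipAA /ipA /= !linearZ /= !(ipZl, ipZr); ring. Qed.

Lemma ipAA_opmx_diag a b x :
  ipAA ip A (opmx T S (a *: x, b *: x)) (a *: x, b *: x)
  = b * a^* * ipA ip A (T x) x + 'i%C * a * b^* * ipA ip A (S x) x.
Proof. by rewrite /ipAA /ipA /opmx /= !linearZ /= !(ipZl, ipZr); ring. Qed.

Lemma ipnorm_diag a b x : a * a^* + b * b^* = 1 ->
  ipnorm (ipAA ip A) (a *: x, b *: x) = ipnorm (ipA ip A) x.
Proof. by move=> ab1; rewrite /ipnorm ipAA_diag ab1 mul1r. Qed.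

Lemma ipA_addi x :
  ipA ip A (T x + 'i%C *: S x) x = 2 * ipAA ip A
    (opmx T S (invsqrt2 *: x, invsqrt2 *: x)) (invsqrt2 *: x, invsqrt2 *: x).
Proof.
rewrite ipAA_opmx_diag conj_invsqrt2 /ipA linearD linearZ /= ipDl ipZl.
transitivity (2 * (invsqrt2 * invsqrt2) * (ipA ip A (T x) x + 'i%C * ipA ip A (S x) x)).
  by rewrite invsqrt2_sqr mulr_half mul1r.
by rewrite /ipA; ring.
Qed.

Lemma ipA_subi x :
  ipA ip A (T x - 'i%C *: S x) x = 2 * - 'i%C * ipAA ip A
    (opmx T S (invsqrt2 *: x, 'i%C * invsqrt2 *: x))
    (invsqrt2 *: x, 'i%C * invsqrt2 *: x).
Proof.
rewrite ipAA_opmx_diag rmorphM /= conj_invsqrt2 conj_i /ipA.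
rewrite linearB linearZ /= ipDl -scaleNr ipZl.
transitivity (2 * (invsqrt2 * invsqrt2) * - ('i%C * 'i%C)
              * (ipA ip A (T x) x - 'i%C * ipA ip A (S x) x)).
  by rewrite invsqrt2_sqr mulr_half mulii opprK !mul1r /ipA; ring.
by rewrite /ipA; ring.
Qed.

End InnerProduct.

Theorem lemma2p21 (R : realType) (H : lmodType R[i]) (ip : H -> H -> R[i])
  (hH : is_hilbert ip)
  (A : {linear H -> H}) (hAb : bounded_op ip A) (hApos : positive_op ip A)
  (hA0 : exists x, A x != 0)
  (T S : {linear H -> H}) (hTb : bounded_op ip T) (hSb : bounded_op ip S)
  (hT : in_BA ip A T) (hS : in_BA ip A S) :
  let w := numrad (ipAA ip A) (opmx T S) in
  (numrad (ipA ip A) (fun x => (T x + 'i%C *: S x)%R) <= 2%:E * w)%E /\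
  (numrad (ipA ip A) (fun x => (T x - 'i%C *: S x)%R) <= 2%:E * w)%E.
Proof.
move=> w; have [ip_inner _] := hH.
split.
- have -> : (2%:E : \bar R) = (cabs (2 : R[i]))%:E by rewrite cabs_natr.
  apply: (@numrad_le_embed _ _ _ _ _ _ _ (fun x => (invsqrt2 *: x, invsqrt2 *: x))) => x.
    exact: (ipnorm_diag ip_inner A x (normsum_invsqrt2 R)).
  exact: (ipA_addi ip_inner A T S x).
- have -> : (2%:E : \bar R) = (cabs (2 * - 'i%C : R[i]))%:E.
    by rewrite cabsM cabsNi cabs_natr mulr1.
  apply: (@numrad_le_embed _ _ _ _ _ _ _ (fun x => (invsqrt2 *: x, 'i%C * invsqrt2 *: x))) => x.
    exact: (ipnorm_diag ip_inner A x (normsum_invsqrt2_i R)).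
  exact: (ipA_subi ip_inner A T S x).
Qed.
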